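(* Let $a<b$, $n\ge 1$, $h=(b-a)/n$, $x_k=a+kh$, and let $S^n_{5,1}$ and the Gaussian quadrature rule be as in the context. Then for every $k=1,\dots,n$ the open interval $J_k=(x_{k-1},x_k)$ contains at least two nodes of the Gaussian quadrature rule.
   Context: $S^n_{5,1}=\{f\in C^1[a,b]:\ f|_{(x_{k-1},x_k)}\text{ is a polynomial of degree}\le 5,\ k=1,\dots,n\}$; it has dimension $4n+2$. A Gaussian quadrature rule for $S^n_{5,1}$ is a rule $f\mapsto\sum_{i=1}^{2n+1}\omega_i f(\tau_i)$ with $2n+1$ distinct nodes $\tau_i\in[a,b]$ and positive weights $\omega_i>0$ such that $\int_a^b f(t)\,dt=\sum_{i=1}^{2n+1}\omega_i f(\tau_i)$ for every $f\in S^n_{5,1}$ (by a result of Micchelli and Pinkus, $2n+1$ is the minimal number of nodes of a rule exact on $S^n_{5,1}$, and such a rule exists). *)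

From Stdlib Require Import Reals.
Open Scope R_scope.

Definition knot (a b : R) (n k : nat) : R := a + INR k * ((b - a) / INR n).

Definition C1_on (a b : R) (f : R -> R) : Prop :=
  exists g : R -> R,
    (forall t, a <= t <= b ->
       limit1_in (fun y => (f y - f t) / (y - t))
                 (fun y => a <= y <= b /\ y <> t) (g t) t) /\
    (forall t, a <= t <= b ->
       limit1_in g (fun y => a <= y <= b) (g t) t).

Definition poly5_on (l r : R) (f : R -> R) : Prop :=
  exists c : nat -> R,
    forall t, l < t < r -> f t = sum_f_R0 (fun i => c i * t ^ i) 5.

Definition S51 (a b : R) (n : nat) (f : R -> R) : Prop :=
  C1_on a b f /\
  forall k : nat, (1 <= k <= n)%nat -> poly5_on (knot a b n (k - 1)) (knot a b n k) f.

Definition gauss_rule (a b : R) (n : nat) (tau omega : nat -> R) : Prop :=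
  (forall i j : nat, (i < 2 * n + 1)%nat -> (j < 2 * n + 1)%nat -> i <> j ->
     tau i <> tau j) /\
  (forall i : nat, (i < 2 * n + 1)%nat -> a <= tau i <= b) /\
  (forall i : nat, (i < 2 * n + 1)%nat -> 0 < omega i) /\
  (forall f : R -> R, S51 a b n f ->
     forall pr : Riemann_integrable f a b,
       RiemannInt pr = sum_f_R0 (fun i => omega i * f (tau i)) (2 * n)).

From Stdlib Require Import Reals Lra Lia Classical.
From Coquelicot Require Import Coquelicot.
Open Scope R_scope.

(* Suppose the cell J_j = (l, l+h) contains at most one node t.  Take the
   spline F vanishing outside [l, l+2h] with
     F = -h^2 (x-l)^2 (x-t)^2 (l+h-x)                              on J_j,
     F = (l+h-t)^2 (x-l-h) (l+2h-x)^2 (2l+3h-2x)^2                   on J_(j+1).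
   F is C^1, non-negative at every node, and its integral is
   -h^6 (2l+h-2t)^2 / 60 <= 0.  Exactness forces this integral and every
   term of the quadrature sum to vanish, so t is the midpoint of J_j and
   J_(j+1) contains at most its own midpoint as a node.  Thus "at most one
   node" propagates from J_j to J_(j+1); on the last cell the right piece
   is unavailable, and the integral of the left piece alone is negative. *)

Definition glue (c : R) (f g : R -> R) : R -> R :=
  fun y => if Rle_dec y c then f y else g y.

Lemma glue_locally_left c f g x :
  x < c -> locally x (fun y => f y = glue c f g y).
Proof.
  intros Hx. exists (mkposreal _ (proj2 (Rlt_0_minus _ _) Hx)).
  intros y Hy. apply Rabs_def2 in Hy. simpl in Hy.
  unfold minus, plus, opp in Hy; simpl in Hy.
  unfold glue. destruct (Rle_dec y c); [reflexivity | lra].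
Qed.

Lemma glue_locally_right c f g x :
  c < x -> locally x (fun y => g y = glue c f g y).
Proof.
  intros Hx. exists (mkposreal _ (proj2 (Rlt_0_minus _ _) Hx)).
  intros y Hy. apply Rabs_def2 in Hy. simpl in Hy.
  unfold minus, plus, opp in Hy; simpl in Hy.
  unfold glue. destruct (Rle_dec y c); [lra | reflexivity].
Qed.

Lemma continuity_pt_glue c f g :
  (forall x, continuity_pt f x) -> (forall x, continuity_pt g x) -> f c = g c ->
  forall x, continuity_pt (glue c f g) x.
Proof.
  intros Hf Hg Efg x. apply continuity_pt_filterlim.
  destruct (Rtotal_order x c) as [Hlt | [-> | Hgt]].
  - apply (continuous_ext_loc _ f); [apply glue_locally_left; exact Hlt|].
    apply continuity_pt_filterlim, Hf.
  - apply continuity_pt_filterlim, continuity_pt_locally. intros eps.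
    generalize (filter_and _ _ (proj1 (continuity_pt_locally f c) (Hf c) eps)
                               (proj1 (continuity_pt_locally g c) (Hg c) eps)).
    apply filter_imp. intros y [Hfy Hgy]. unfold glue.
    destruct (Rle_dec c c) as [_ | Hcc]; [|lra].
    destruct (Rle_dec y c); [exact Hfy | rewrite Efg; exact Hgy].
  - apply (continuous_ext_loc _ g); [apply glue_locally_right; exact Hgt|].
    apply continuity_pt_filterlim, Hg.
Qed.

Lemma derivable_pt_lim_glue c f g f' g' :
  (forall x, derivable_pt_lim f x (f' x)) -> (forall x, derivable_pt_lim g x (g' x)) ->
  f c = g c -> f' c = g' c ->
  forall x, derivable_pt_lim (glue c f g) x (glue c f' g' x).
Proof.
  intros Hf Hg Efg Ef'g' x.
  destruct (Rtotal_order x c) as [Hlt | [-> | Hgt]].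
  - unfold glue at 2. destruct (Rle_dec x c); [|lra].
    apply is_derive_Reals, (is_derive_ext_loc f); [apply glue_locally_left; exact Hlt|].
    apply is_derive_Reals, Hf.
  - intros eps Heps.
    destruct (Hf c eps Heps) as [d1 H1]; destruct (Hg c eps Heps) as [d2 H2].
    exists (mkposreal (Rmin d1 d2) (Rmin_pos _ _ (cond_pos d1) (cond_pos d2))).
    intros dx Hdx0 Hdx; simpl in Hdx.
    assert (Hdx1 : Rabs dx < d1) by (eapply Rlt_le_trans; [exact Hdx | apply Rmin_l]).
    assert (Hdx2 : Rabs dx < d2) by (eapply Rlt_le_trans; [exact Hdx | apply Rmin_r]).
    unfold glue. destruct (Rle_dec c c) as [_ | Hcc]; [|lra].
    destruct (Rle_dec (c + dx) c); [apply H1; auto|].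
    rewrite Efg, Ef'g'. apply H2; auto.
  - unfold glue at 2. destruct (Rle_dec x c); [lra|].
    apply is_derive_Reals, (is_derive_ext_loc g); [apply glue_locally_right; exact Hgt|].
    apply is_derive_Reals, Hg.
Qed.

Lemma C1_on_of_derivable a b f f' :
  (forall x, derivable_pt_lim f x (f' x)) -> (forall x, continuity_pt f' x) ->
  C1_on a b f.
Proof.
  intros Hf Hf'. exists f'. split; intros t _ eps Heps.
  - destruct (Hf t eps Heps) as [d Hd].
    exists d; split; [apply cond_pos|]. intros y [[_ Hyt] Hy]. simpl in Hy.
    unfold R_dist in *.
    replace y with (t + (y - t)) at 1 by ring. apply Hd; [lra | exact Hy].
  - destruct (Hf' t eps Heps) as [d [Hd H]].
    exists d; split; [exact Hd|]. intros y [_ Hy].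
    destruct (Req_dec y t) as [-> | Hyt].
    + simpl. rewrite R_dist_eq. exact Heps.
    + apply H; split; [split; [exact I | auto] | exact Hy].
Qed.

Lemma poly5_on_shift l r s b0 b1 b2 b3 b4 b5 (f : R -> R) :
  (forall x, l < x < r ->
     f x = b0 + b1 * (x-s) + b2 * (x-s)^2 + b3 * (x-s)^3 + b4 * (x-s)^4 + b5 * (x-s)^5) ->
  poly5_on l r f.
Proof.
  intros Hf.
  exists (fun i => match i with
    | 0%nat => b0 - b1*s + b2*s^2 - b3*s^3 + b4*s^4 - b5*s^5
    | 1%nat => b1 - 2*b2*s + 3*b3*s^2 - 4*b4*s^3 + 5*b5*s^4
    | 2%nat => b2 - 3*b3*s + 6*b4*s^2 - 10*b5*s^3
    | 3%nat => b3 - 4*b4*s + 10*b5*s^2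
    | 4%nat => b4 - 5*b5*s
    | _ => b5 end).
  intros x Hx. rewrite (Hf x Hx). simpl. ring.
Qed.

Lemma poly5_on_zero l r (f : R -> R) : (forall x, l < x < r -> f x = 0) -> poly5_on l r f.
Proof.
  intros Hf. apply (poly5_on_shift _ _ 0 0 0 0 0 0 0).
  intros x Hx. rewrite (Hf x Hx). ring.
Qed.

Lemma sum_f_R0_ge0 (f : nat -> R) N :
  (forall i, (i <= N)%nat -> 0 <= f i) -> 0 <= sum_f_R0 f N.
Proof.
  induction N as [|N IH]; intros Hf; simpl; [apply Hf; lia|].
  assert (0 <= sum_f_R0 f N) by (apply IH; intros; apply Hf; lia).
  assert (0 <= f (S N)) by (apply Hf; lia). lra.
Qed.

Lemma sum_f_R0_eq0_ge0 (f : nat -> R) N :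
  (forall i, (i <= N)%nat -> 0 <= f i) ->
  sum_f_R0 f N = 0 -> forall i, (i <= N)%nat -> f i = 0.
Proof.
  induction N as [|N IH]; intros Hf Hsum i Hi; simpl in Hsum.
  - replace i with 0%nat by lia. exact Hsum.
  - assert (0 <= sum_f_R0 f N) by (apply sum_f_R0_ge0; intros; apply Hf; lia).
    assert (0 <= f (S N)) by (apply Hf; lia).
    destruct (Nat.eq_dec i (S N)) as [-> | Hne]; [lra|].
    apply IH; [intros; apply Hf; lia | lra | lia].
Qed.

Lemma pow2_eq_0 (x : R) : x ^ 2 = 0 -> x = 0.
Proof. intros H. nra. Qed.

Lemma knot_0 a b n : knot a b n 0 = a.
Proof. unfold knot. simpl. ring. Qed.

Lemma knot_n a b n : (1 <= n)%nat -> knot a b n n = b.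
Proof. intros Hn. unfold knot. field. apply not_0_INR. lia. Qed.

Lemma knot_S a b n k : knot a b n (S k) = knot a b n k + (b - a) / INR n.
Proof. unfold knot. rewrite S_INR. ring. Qed.

Lemma knot_pred a b n k : (1 <= k)%nat -> knot a b n k = knot a b n (k - 1) + (b - a) / INR n.
Proof. intros Hk. replace k with (S (k - 1)) at 1 by lia. apply knot_S. Qed.

Lemma knot_le a b n i i' :
  0 < (b - a) / INR n -> (i <= i')%nat -> knot a b n i <= knot a b n i'.
Proof. intros Hh Hi. unfold knot. apply le_INR in Hi. nra. Qed.

Lemma mesh_gt0 a b n : a < b -> (1 <= n)%nat -> 0 < (b - a) / INR n.
Proof. intros. apply Rdiv_lt_0_compat; [lra | apply lt_0_INR; lia]. Qed.

Section TestSpline.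

Variables l h t : R.

Definition spline_left x := - h^2 * ((x-l)^2 * (x-t)^2 * (l+h-x)).
Definition spline_left_deriv x :=
  - h^2 * (2*(x-l)*(x-t)^2*(l+h-x) + (x-l)^2*(2*(x-t))*(l+h-x) - (x-l)^2*(x-t)^2).
Definition spline_left_prim x :=
  let T := t - l in let y := x - l in
  - h^2 * (- y^6/6 + (h+2*T)*y^5/5 - (2*T*h+T^2)*y^4/4 + T^2*h*y^3/3).

(* The factor (l+h-t)^2 matches the slopes of the two pieces at l+h. *)
Definition spline_right x := (l+h-t)^2 * ((x-(l+h)) * (l+2*h-x)^2 * (2*l+3*h-2*x)^2).
Definition spline_right_deriv x := (l+h-t)^2 * ((l+2*h-x)^2 * (2*l+3*h-2*x)^2
   + (x-(l+h)) * (2*(l+2*h-x)*(-1)) * (2*l+3*h-2*x)^2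
   + (x-(l+h)) * (l+2*h-x)^2 * (2*(2*l+3*h-2*x)*(-2))).
Definition spline_right_prim x :=
  let z := x - (l+h) in
  (l+h-t)^2 * (h^4*z^2/2 - 2*h^3*z^3 + 13*h^2*z^4/4 - 12*h*z^5/5 + 2*z^6/3).

Lemma spline_left_derivable x : derivable_pt_lim spline_left x (spline_left_deriv x).
Proof. apply is_derive_Reals. unfold spline_left, spline_left_deriv. auto_derive; auto. ring. Qed.

Lemma spline_right_derivable x : derivable_pt_lim spline_right x (spline_right_deriv x).
Proof. apply is_derive_Reals. unfold spline_right, spline_right_deriv. auto_derive; auto. ring. Qed.

Lemma spline_left_prim_derivable x : derivable_pt_lim spline_left_prim x (spline_left x).
Proof. apply is_derive_Reals. unfold spline_left_prim, spline_left. auto_derive; auto. field. Qed.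

Lemma spline_right_prim_derivable x : derivable_pt_lim spline_right_prim x (spline_right x).
Proof. apply is_derive_Reals. unfold spline_right_prim, spline_right. auto_derive; auto. field. Qed.

Lemma spline_left_deriv_continuous x : continuity_pt spline_left_deriv x.
Proof.
  apply derivable_continuous_pt, ex_derive_Reals_0.
  unfold spline_left_deriv; auto_derive; auto.
Qed.

Lemma spline_right_deriv_continuous x : continuity_pt spline_right_deriv x.
Proof.
  apply derivable_continuous_pt, ex_derive_Reals_0.
  unfold spline_right_deriv; auto_derive; auto.
Qed.

Lemma spline_right_eq0 x :
  spline_right x = 0 -> t = l + h \/ x = l + h \/ x = l + 2*h \/ 2*x = 2*l + 3*h.
Proof.
  unfold spline_right. intros H0.
  apply Rmult_integral in H0 as [H0 | H0]; [apply pow2_eq_0 in H0; lra|].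
  apply Rmult_integral in H0 as [H0 | H0]; [|apply pow2_eq_0 in H0; lra].
  apply Rmult_integral in H0 as [H0 | H0]; [lra|].
  apply pow2_eq_0 in H0; lra.
Qed.

Hypothesis h_gt0 : 0 < h.

Definition test_spline :=
  glue l (fun _ => 0) (glue (l+h) spline_left (glue (l+2*h) spline_right (fun _ => 0))).
Definition test_spline_deriv :=
  glue l (fun _ => 0)
    (glue (l+h) spline_left_deriv (glue (l+2*h) spline_right_deriv (fun _ => 0))).
Definition test_spline_prim :=
  glue l (fun _ => 0) (glue (l+h) spline_left_prim
    (glue (l+2*h) (fun x => spline_left_prim (l+h) + spline_right_prim x)
                  (fun _ => spline_left_prim (l+h) + spline_right_prim (l+2*h)))).

Local Ltac case_glue := unfold glue; repeat match goal with
  |- context [Rle_dec ?x ?y] => destruct (Rle_dec x y); try lra end.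

Lemma test_spline_derivable x : derivable_pt_lim test_spline x (test_spline_deriv x).
Proof.
  unfold test_spline, test_spline_deriv.
  apply derivable_pt_lim_glue; [intros; apply derivable_pt_lim_const | | |].
  - apply derivable_pt_lim_glue; [apply spline_left_derivable | | |].
    + apply derivable_pt_lim_glue;
        [apply spline_right_derivable | intros; apply derivable_pt_lim_const | |].
      * unfold spline_right; ring.
      * unfold spline_right_deriv; ring.
    + case_glue. unfold spline_right, spline_left; ring.
    + case_glue. unfold spline_right_deriv, spline_left_deriv; ring.
  - case_glue. unfold spline_left; ring.
  - case_glue. unfold spline_left_deriv; ring.
Qed.

Lemma test_spline_deriv_continuous x : continuity_pt test_spline_deriv x.
Proof.
  unfold test_spline_deriv.
  apply continuity_pt_glue; [intros; apply continuity_pt_const; intros ? ?; auto | |].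
  - apply continuity_pt_glue; [apply spline_left_deriv_continuous | |].
    + apply continuity_pt_glue;
        [apply spline_right_deriv_continuous
        | intros; apply continuity_pt_const; intros ? ?; auto |].
      unfold spline_right_deriv; ring.
    + case_glue. unfold spline_right_deriv, spline_left_deriv; ring.
  - case_glue. unfold spline_left_deriv; ring.
Qed.

Lemma test_spline_continuous x : continuity_pt test_spline x.
Proof.
  apply derivable_continuous_pt. exists (test_spline_deriv x). apply test_spline_derivable.
Qed.

Lemma test_spline_prim_derivable x : derivable_pt_lim test_spline_prim x (test_spline x).
Proof.
  unfold test_spline_prim, test_spline.
  apply derivable_pt_lim_glue; [intros; apply derivable_pt_lim_const | | |].
  - apply derivable_pt_lim_glue; [apply spline_left_prim_derivable | | |].
    + apply derivable_pt_lim_glue; [| intros; apply derivable_pt_lim_const | reflexivity |].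
      * intros y. rewrite <- (Rplus_0_l (spline_right y)).
        apply derivable_pt_lim_plus;
          [apply derivable_pt_lim_const | apply spline_right_prim_derivable].
      * unfold spline_right; ring.
    + case_glue. unfold spline_right_prim; cbv zeta; field.
    + case_glue. unfold spline_right, spline_left; ring.
  - case_glue. unfold spline_left_prim; cbv zeta; field.
  - case_glue. unfold spline_left; ring.
Qed.

Lemma test_spline_integral a b (pr : Riemann_integrable test_spline a b) :
  RiemannInt pr = test_spline_prim b - test_spline_prim a.
Proof.
  rewrite <- RInt_Reals. apply is_RInt_unique.
  generalize (is_RInt_derive test_spline_prim test_spline a b).
  unfold minus, plus, opp; simpl. intros Hint. apply Hint.
  - intros x _. apply is_derive_Reals, test_spline_prim_derivable.
  - intros x _. apply continuity_pt_filterlim, test_spline_continuous.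
Qed.

Lemma test_spline_prim_left a : a <= l -> test_spline_prim a = 0.
Proof. intros. unfold test_spline_prim; case_glue. Qed.

Lemma test_spline_prim_mid :
  test_spline_prim (l+h) = - h^6 * ((t - l - 3*h/5)^2 / 12 + h^2 / 300).
Proof. unfold test_spline_prim; case_glue. unfold spline_left_prim; cbv zeta. field. Qed.

Lemma test_spline_prim_right b :
  l + 2*h <= b -> test_spline_prim b = - h^6 * (2*l + h - 2*t)^2 / 60.
Proof.
  intros. destruct (Req_dec b (l+2*h)) as [-> | Hne];
    unfold test_spline_prim; case_glue;
    unfold spline_left_prim, spline_right_prim; cbv zeta; field.
Qed.

Lemma test_spline_outside x : x <= l \/ l + 2*h < x -> test_spline x = 0.
Proof. intros Hx. unfold test_spline; case_glue. Qed.

Lemma test_spline_on_left x : l < x <= l + h -> test_spline x = spline_left x.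
Proof. intros Hx. unfold test_spline; case_glue. Qed.

Lemma test_spline_on_right x : l + h < x <= l + 2*h -> test_spline x = spline_right x.
Proof. intros Hx. unfold test_spline; case_glue. Qed.

Lemma test_spline_ge0 x : (l < x < l + h -> x = t) -> 0 <= test_spline x.
Proof.
  intros Hx.
  destruct (Rle_lt_dec x l) as [Hl | Hl]; [rewrite test_spline_outside; lra|].
  destruct (Rle_lt_dec x (l+h)) as [Hlh | Hlh].
  - rewrite test_spline_on_left by lra. unfold spline_left.
    destruct (Req_dec x (l+h)) as [-> | Hne]; [right; ring|].
    rewrite Hx by lra. right; ring.
  - destruct (Rle_lt_dec x (l+2*h)) as [Hr | Hr]; [|rewrite test_spline_outside; lra].
    rewrite test_spline_on_right by lra. unfold spline_right.
    apply Rmult_le_pos; [apply pow2_ge_0|].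
    apply Rmult_le_pos; [apply Rmult_le_pos; [lra | apply pow2_ge_0] | apply pow2_ge_0].
Qed.

End TestSpline.

Section GaussRule.

Variables (a b : R) (n : nat) (tau omega : nat -> R).
Hypotheses (a_lt_b : a < b) (n_ge1 : (1 <= n)%nat) (rule : gauss_rule a b n tau omega).

Lemma test_spline_S51 j t : (1 <= j <= n)%nat ->
  S51 a b n (test_spline (knot a b n (j - 1)) ((b - a) / INR n) t).
Proof.
  intros Hj. set (h := (b - a) / INR n). set (l := knot a b n (j - 1)).
  assert (Hh : 0 < h) by (apply mesh_gt0; auto).
  assert (Hkj : knot a b n j = l + h) by (apply knot_pred; lia).
  assert (HkSj : knot a b n (S j) = l + 2*h) by (rewrite knot_S, Hkj; fold h; ring).
  split.
  - apply (C1_on_of_derivable _ _ _ (test_spline_deriv l h t));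
      [apply test_spline_derivable | apply test_spline_deriv_continuous]; exact Hh.
  - intros k Hk.
    destruct (Nat.lt_ge_cases k j) as [Hlt | Hge].
    + assert (knot a b n k <= l) by (apply knot_le; [exact Hh | lia]).
      apply poly5_on_zero. intros x Hx. apply test_spline_outside; lra.
    + destruct (Nat.eq_dec k j) as [-> | Hne].
      * fold l. rewrite Hkj.
        apply (poly5_on_shift _ _ l 0 0 (-h^2*((t-l)^2*h)) (-h^2*(-(2*(t-l)*h+(t-l)^2)))
                 (-h^2*(h+2*(t-l))) (h^2)).
        intros x Hx. rewrite test_spline_on_left by lra. unfold spline_left. ring.
      * destruct (Nat.eq_dec k (S j)) as [-> | Hne2].
        -- replace (S j - 1)%nat with j by lia. rewrite Hkj, HkSj.
           set (s := (l + h - t)^2).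
           apply (poly5_on_shift _ _ (l+h) 0 (s*h^4) (-6*s*h^3) (13*s*h^2) (-12*s*h) (4*s)).
           intros x Hx. rewrite test_spline_on_right by lra. unfold spline_right. fold s. ring.
        -- assert (knot a b n (S j) <= knot a b n (k - 1)) by (apply knot_le; [exact Hh | lia]).
           apply poly5_on_zero. intros x Hx. apply test_spline_outside; lra.
Qed.

Definition at_most_one_node (j : nat) : Prop :=
  exists t, forall i, (i < 2 * n + 1)%nat ->
    knot a b n (j - 1) < tau i < knot a b n j -> tau i = t.

Lemma quadrature_test_spline j t : (1 <= j <= n)%nat ->
  (forall i, (i < 2 * n + 1)%nat -> knot a b n (j - 1) < tau i < knot a b n j -> tau i = t) ->
  let F := test_spline (knot a b n (j - 1)) ((b - a) / INR n) t in
  test_spline_prim (knot a b n (j - 1)) ((b - a) / INR n) t b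
    = sum_f_R0 (fun i => omega i * F (tau i)) (2 * n) /\
  (forall i, (i <= 2 * n)%nat -> 0 <= omega i * F (tau i)).
Proof.
  intros Hj Ht; cbv zeta. destruct rule as (_ & _ & Homega & Hexact).
  set (h := (b - a) / INR n) in *. set (l := knot a b n (j - 1)) in *.
  assert (Hh : 0 < h) by (apply mesh_gt0; auto).
  assert (Hal : a <= l) by (rewrite <- (knot_0 a b n); apply knot_le; [exact Hh | lia]).
  assert (pr : Riemann_integrable (test_spline l h t) a b).
  { apply continuity_implies_RiemannInt; [lra|]. intros; apply test_spline_continuous; exact Hh. }
  split.
  - rewrite <- (Hexact (test_spline l h t) (test_spline_S51 j t Hj) pr).
    rewrite (test_spline_integral l h t Hh a b pr).
    rewrite (test_spline_prim_left l h t a) by auto. ring.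
  - intros i Hi. apply Rmult_le_pos; [left; apply Homega; lia|].
    apply test_spline_ge0; [exact Hh|]. intros Hx. apply Ht; [lia|].
    unfold l in Hx; rewrite (knot_pred a b n j) by lia; exact Hx.
Qed.

Lemma not_at_most_one_node_last : ~ at_most_one_node n.
Proof.
  intros [t Ht].
  destruct (quadrature_test_spline n t ltac:(lia) Ht) as [Hsum Hterms].
  set (h := (b - a) / INR n) in *. set (l := knot a b n (n - 1)) in *.
  assert (Hh : 0 < h) by (apply mesh_gt0; auto).
  assert (Hb : b = l + h) by (rewrite <- (knot_n a b n), knot_pred by lia; reflexivity).
  rewrite Hb, test_spline_prim_mid in Hsum by exact Hh.
  generalize (sum_f_R0_ge0 _ _ Hterms). rewrite <- Hsum.
  assert (0 < h^6) by (apply pow_lt; exact Hh).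
  assert (0 < h^2) by (apply pow_lt; exact Hh).
  generalize (pow2_ge_0 (t - l - 3*h/5)). nra.
Qed.

Lemma at_most_one_node_S j : (1 <= j < n)%nat -> at_most_one_node j -> at_most_one_node (S j).
Proof.
  intros Hj [t Ht].
  destruct (quadrature_test_spline j t ltac:(lia) Ht) as [Hsum Hterms].
  set (h := (b - a) / INR n) in *. set (l := knot a b n (j - 1)) in *.
  assert (Hh : 0 < h) by (apply mesh_gt0; auto).
  assert (Hkj : knot a b n j = l + h) by (apply knot_pred; lia).
  assert (HkSj : knot a b n (S j) = l + 2*h) by (rewrite knot_S, Hkj; fold h; ring).
  assert (Hl2h : l + 2*h <= b).
  { rewrite <- HkSj. apply (Rle_trans _ (knot a b n n)); [apply knot_le; [exact Hh | lia]|].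
    rewrite knot_n by exact n_ge1. apply Rle_refl. }
  rewrite test_spline_prim_right in Hsum by auto.
  assert (Hmid : 2*l + h - 2*t = 0).
  { apply pow2_eq_0. generalize (sum_f_R0_ge0 _ _ Hterms). rewrite <- Hsum.
    assert (0 < h^6) by (apply pow_lt; exact Hh).
    generalize (pow2_ge_0 (2*l + h - 2*t)). nra. }
  assert (Hsum0 : sum_f_R0 (fun i => omega i * test_spline l h t (tau i)) (2 * n) = 0).
  { rewrite <- Hsum, Hmid. unfold Rdiv. rewrite pow_i by lia. ring. }
  exists (knot a b n j + h / 2). intros i Hi Hx.
  replace (S j - 1)%nat with j in Hx by lia. rewrite Hkj, HkSj in Hx.
  generalize (sum_f_R0_eq0_ge0 _ _ Hterms Hsum0 i ltac:(lia)). intros Hzero.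
  apply Rmult_integral in Hzero as [Hzero | Hzero].
  { destruct rule as (_ & _ & Homega & _). specialize (Homega i Hi). lra. }
  rewrite test_spline_on_right in Hzero by lra.
  apply spline_right_eq0 in Hzero. rewrite Hkj. lra.
Qed.

Lemma not_at_most_one_node j : (1 <= j <= n)%nat -> ~ at_most_one_node j.
Proof.
  remember (n - j)%nat as d eqn:Hd. revert j Hd.
  induction d as [|d IH]; intros j Hd Hj Hone.
  - replace j with n in Hone by lia. exact (not_at_most_one_node_last Hone).
  - apply (IH (S j)); [lia | lia | apply at_most_one_node_S; [lia | exact Hone]].
Qed.

End GaussRule.

Theorem lemma2 (a b : R) (n : nat) (tau omega : nat -> R) :
  a < b -> (1 <= n)%nat -> gauss_rule a b n tau omega ->
  forall k : nat, (1 <= k <= n)%nat ->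
    exists i j : nat,
      (i < 2 * n + 1)%nat /\ (j < 2 * n + 1)%nat /\ i <> j /\
      knot a b n (k - 1) < tau i < knot a b n k /\
      knot a b n (k - 1) < tau j < knot a b n k.
Proof.
  intros Hab Hn Hrule k Hk. apply NNPP. intros Hno_two.
  apply (not_at_most_one_node a b n tau omega Hab Hn Hrule k Hk).
  destruct (classic (exists i0, (i0 < 2 * n + 1)%nat /\
                                knot a b n (k - 1) < tau i0 < knot a b n k))
    as [[i0 [Hi0 Hx0]] | Hnone].
  - exists (tau i0). intros i Hi Hx.
    destruct (Nat.eq_dec i i0) as [-> | Hne]; [reflexivity|].
    exfalso. apply Hno_two. exists i, i0. tauto.
  - exists 0. intros i Hi Hx. exfalso. apply Hnone. exists i. auto.
Qed.
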